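(* Let $X$ and $Y$ be nontrivial real Banach spaces. (a) If $X^*$ has the weak$^*$ strong diameter $2$ property, then $(X\oplus_1 Y)^*$ has the weak$^*$ strong diameter $2$ property. (b) If $1<p<\infty$, then $(X\oplus_p Y)^*$ does not have the weak$^*$ strong diameter $2$ property. (c) If $X^*$ and $Y^*$ have the weak$^*$ strong diameter $2$ property, then $(X\oplus_\infty Y)^*$ has the weak$^*$ strong diameter $2$ property. (d) If $(X\oplus_\infty Y)^*$ has the weak$^*$ strong diameter $2$ property, then $X^*$ has the weak$^*$ strong diameter $2$ property.
   Context: For $1\le p<\infty$, $X\oplus_p Y$ is $X\times Y$ with norm $(\|x\|^p+\|y\|^p)^{1/p}$; $X\oplus_\infty Y$ has norm $\max\{\|x\|,\|y\|\}$. For a Banach space $Z$, a weak$^*$ slice of $B_{Z^*}$ is a set $\{z^*\in B_{Z^*}: z^*(z)>1-\alpha\}$ with $z\in S_Z$, $\alpha>0$; $Z^*$ has the weak$^*$ strong diameter $2$ property if every convex combination $\sum_{i=1}^n\lambda_iS_i$ ($n\in\mathbb{N}$, $\lambda_i\geq0$, $\sum\lambda_i=1$, $S_i$ weak$^*$ slices of $B_{Z^*}$) has diameter $2$. *)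

From HB Require Import structures.
From mathcomp Require Import all_boot all_order all_algebra.
From mathcomp Require Import all_classical all_reals all_analysis.
Set Implicit Arguments. Unset Strict Implicit. Unset Printing Implicit Defensive.
Import Order.TTheory GRing.Theory Num.Theory.
Import numFieldNormedType.Exports.
Local Open Scope classical_set_scope.
Local Open Scope ring_scope.

(* A real vector space V equipped with a norm function N : V -> R.
   Elements of the dual are represented as linear maps V -> R. *)
Section Dual.
Variables (R : realType) (V : lmodType R) (N : V -> R).

Definition is_linear_functional (f : V -> R) : Prop :=
  forall (a : R) (x y : V), f (a *: x + y) = a * f x + f y.

Definition dual_ball : set (V -> R) :=
  [set f | is_linear_functional f /\ forall x, `|f x| <= N x].

Definition dual_norm (f : V -> R) : R :=
  sup [set `|f x| | x in [set x : V | N x <= 1]].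

Definition wstar_slice (z : V) (alpha : R) : set (V -> R) :=
  [set f | dual_ball f /\ 1 - alpha < f z].

Definition is_wstar_slice (S : set (V -> R)) : Prop :=
  exists (z : V) (alpha : R), N z = 1 /\ 0 < alpha /\ S = wstar_slice z alpha.

Definition comb_sets (n : nat) (lambda : 'I_n -> R) (S : 'I_n -> set (V -> R))
  : set (V -> R) :=
  [set g | exists f : 'I_n -> V -> R,
     (forall i, S i (f i)) /\ g = (fun x => \sum_(i < n) lambda i * f i x)].

Definition dual_diam (A : set (V -> R)) : \bar R :=
  ereal_sup [set d | exists f g, A f /\ A g /\
                     d = (dual_norm (fun x => f x - g x))%:E].

Definition wstar_SD2P : Prop :=
  forall (n : nat) (lambda : 'I_n -> R) (S : 'I_n -> set (V -> R)),
    (forall i, 0 <= lambda i) -> \sum_(i < n) lambda i = 1 ->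
    (forall i, is_wstar_slice (S i)) ->
    dual_diam (comb_sets lambda S) = 2%:E.

End Dual.

Definition norm_sum1 (R : realType) (X Y : normedModType R) (v : X * Y) : R :=
  `|v.1| + `|v.2|.
Definition norm_sump (R : realType) (p : R) (X Y : normedModType R) (v : X * Y) : R :=
  powR (powR `|v.1| p + powR `|v.2| p) p^-1.
Definition norm_suminf (R : realType) (X Y : normedModType R) (v : X * Y) : R :=
  Num.max `|v.1| `|v.2|.

From HB Require Import structures.
From mathcomp Require Import all_boot all_order all_algebra.
From mathcomp Require Import all_classical all_reals all_analysis.
From mathcomp Require Import ring lra.
Import Order.TTheory GRing.Theory Num.Theory.
Import numFieldNormedType.Exports.
Local Open Scope classical_set_scope.
Local Open Scope ring_scope.

Set Implicit Arguments. Unset Strict Implicit. Unset Printing Implicit Defensive.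

(* Everything goes through a pointwise form of the weak* strong diameter 2 property
   ([diam2_witnessed]): for every convex combination sum_i l_i S_i of weak* slices and
   every e > 0 there are f_i, g_i in S_i and a point x of the unit ball with
   sum_i l_i (f_i x - g_i x) > 2 - e.
   (a) A slice of B_{(X +_1 Y)*} centred at (x, y) contains g o fst + h o snd whenever h
   norms y (Hahn-Banach) and g lies in a suitable slice of B_{X*}, so witnesses for X,
   evaluated at (x, 0), are witnesses for X +_1 Y.
   (c) A slice centred at (x, y) with |x| = 1 (resp. |y| = 1) contains g o fst (resp.
   h o snd) for g (resp. h) in a slice of B_{X*} (resp. B_{Y*}). A nearly maximal convex
   sum is nearly maximal on every block of indices, so witnesses for X and for Y combine
   at (x, y).
   (d) A functional of B_{(X +_oo Y)*} nearly attaining its norm at (x, 0), |x| = 1, is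
   small on 0 + Y, so restricting witnesses for X +_oo Y to X loses little.
   (b) For 1 < p the same smallness holds to first order at (u, 0) and at (0, v), so the
   average of two functionals from slices there is at most (1 + eps) (|x| + |y|), while
   |x|^p + |y|^p <= 1 forces |x| + |y| <= 1 + 2^(-1/p) < 2. *)

Section LinearFunctional.
Variables (R : realType) (V : lmodType R) (f : V -> R).
Hypothesis f_lin : is_linear_functional f.

Lemma linfunD x y : f (x + y) = f x + f y.
Proof. by rewrite -[x in x + _]scale1r f_lin mul1r. Qed.

Lemma linfun0 : f 0 = 0.
Proof. by apply/(addrI (f 0)); rewrite -linfunD !addr0. Qed.

Lemma linfunZ a x : f (a *: x) = a * f x.
Proof. by rewrite -[a *: x]addr0 f_lin linfun0 addr0. Qed.

Lemma linfunN x : f (- x) = - f x.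
Proof. by rewrite -scaleN1r linfunZ mulN1r. Qed.

End LinearFunctional.

Section ProductFunctionals.
Variables (R : realType) (X Y : lmodType R).

Lemma linfun_fst (g : X -> R) :
  is_linear_functional g -> is_linear_functional (fun z : X * Y => g z.1).
Proof. by move=> gl a z w; apply: gl. Qed.

Lemma linfun_snd (h : Y -> R) :
  is_linear_functional h -> is_linear_functional (fun z : X * Y => h z.2).
Proof. by move=> hl a z w; apply: hl. Qed.

Lemma linfun_inl (f : X * Y -> R) :
  is_linear_functional f -> is_linear_functional (fun x => f (x, 0)).
Proof. by move=> fl a x x'; rewrite -fl; congr (f (_, _)); rewrite /= scaler0 addr0. Qed.

Lemma linfun_inr (f : X * Y -> R) :
  is_linear_functional f -> is_linear_functional (fun y => f (0, y)).
Proof. by move=> fl a y y'; rewrite -fl; congr (f (_, _)); rewrite /= scaler0 addr0. Qed.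

Lemma linfun_pair (f : X * Y -> R) x y :
  is_linear_functional f -> f (x, y) = f (x, 0) + f (0, y).
Proof. by move=> fl; rewrite -(linfunD fl); congr (f (_, _)); rewrite ?addr0 ?add0r. Qed.

End ProductFunctionals.

Section NormedFunctionals.
Variables (R : realType) (V : normedModType R).

Lemma unit_vector_exists : (exists x : V, x != 0) -> exists u : V, `|u| = 1.
Proof.
move=> [x x0]; exists (`|x|^-1 *: x).
by rewrite normrZ ger0_norm ?invr_ge0 // mulVf // normr_eq0.
Qed.

Lemma linfun_norm_le (f : V -> R) e : is_linear_functional f ->
  (forall w, `|w| = 1 -> f w <= e) -> forall v, `|f v| <= e * `|v|.
Proof.
move=> fl fe v; have [->|v0] := eqVneq v 0; first by rewrite (linfun0 fl) !normr0 mulr0.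
have nv0 : `|v| != 0 by rewrite normr_eq0.
have w1 : `| `|v|^-1 *: v| = 1 by rewrite normrZ ger0_norm ?invr_ge0 // mulVf.
rewrite -[in f v](scale1r v) -(mulfV nv0) -scalerA (linfunZ fl) normrM normr_id mulrC.
rewrite ler_wpM2r // ler_norml; have := fe (- (`|v|^-1 *: v)); rewrite normrN (linfunN fl).
by move=> /(_ w1); have := fe _ w1; lra.
Qed.

Lemma wstar_slice_below (u x : V) a : `|u| = 1 -> 0 < a ->
  exists2 S, is_wstar_slice (fun v : V => `|v|) S & forall g, S g -> `|x| - a < g x.
Proof.
move=> u1 a0; have [->|x0] := eqVneq x 0.
  exists (wstar_slice (fun v : V => `|v|) u a); first by exists u, a.
  by move=> g [[gl _] _]; rewrite (linfun0 gl) normr0 sub0r oppr_lt0.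
have nx : 0 < `|x| by rewrite normr_gt0.
have nx0 : `|x| != 0 by rewrite gt_eqF.
exists (wstar_slice (fun v : V => `|v|) (`|x|^-1 *: x) (a / `|x|)).
  exists (`|x|^-1 *: x), (a / `|x|); split; last by split=> //; exact: divr_gt0.
  by rewrite normrZ ger0_norm ?invr_ge0 // mulVf.
move=> g [[gl _]]; rewrite (linfunZ gl) -(ltr_pM2l nx).
by rewrite mulrBr mulr1 mulrCA mulfV // mulr1 mulrA mulfV // mul1r.
Qed.

Lemma wstar_slices_below n (u : V) (z : 'I_n -> V) (a : 'I_n -> R) : `|u| = 1 ->
  (forall i, 0 < a i) -> exists SX : 'I_n -> set (V -> R), forall i,
  is_wstar_slice (fun v : V => `|v|) (SX i) /\ forall g, SX i g -> `|z i| - a i < g (z i).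
Proof.
move=> u1 a0.
have below i : exists S : set (V -> R), is_wstar_slice (fun v : V => `|v|) S /\
    forall g, S g -> `|z i| - a i < g (z i).
  by have [S ? ?] := wstar_slice_below (z i) u1 (a0 i); exists S.
by have [SX HSX] := choice below; exists SX.
Qed.

End NormedFunctionals.

Lemma sumr_mulrB (R : ringType) n (l a b : 'I_n -> R) :
  \sum_i l i * a i - \sum_i l i * b i = \sum_i l i * (a i - b i).
Proof. by rewrite -sumrB; apply: eq_bigr => i _; rewrite mulrBr. Qed.

Section ConvexSums.
Variables (R : realDomainType) (n : nat) (l a : 'I_n -> R).
Hypotheses (l_ge0 : forall i, 0 <= l i) (l_sum1 : \sum_i l i = 1).

Lemma convex_sum_norm_le c : (forall i, `|a i| <= c) -> `|\sum_i l i * a i| <= c.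
Proof.
move=> ac; apply: le_trans (ler_norm_sum _ _ _) _.
apply: (@le_trans _ _ (\sum_i l i * c)); last by rewrite -mulr_suml l_sum1 mul1r.
by apply: ler_sum => i _; rewrite normrM ger0_norm // ler_wpM2l.
Qed.

Lemma convex_sum_restrict (P : pred 'I_n) c e : (forall i, a i <= c) ->
  c - e < \sum_i l i * a i -> c * \sum_(i | P i) l i - e < \sum_(i | P i) l i * a i.
Proof.
move=> ac; rewrite (bigID P) /= => lt.
have : \sum_(i | ~~ P i) l i * a i <= c * \sum_(i | ~~ P i) l i.
  by rewrite mulr_sumr; apply: ler_sum => i _; rewrite mulrC ler_wpM2r.
have : c * \sum_(i | P i) l i + c * \sum_(i | ~~ P i) l i = c.
  by rewrite -mulrDr -[in RHS](mulr1 c) -l_sum1 [in RHS](bigID P).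
by move: lt; lra.
Qed.

End ConvexSums.

Section DualBall.
Variables (R : realType) (V : lmodType R) (N : V -> R).

Lemma dual_ball_le f x : dual_ball N f -> `|f x| <= N x.
Proof. by case=> _; apply. Qed.

Lemma wstar_slice_dual_ball S : is_wstar_slice N S -> S `<=` dual_ball N.
Proof. by move=> [z [a [_ [_ ->]]]] f []. Qed.

Lemma wstar_slice_centers n (S : 'I_n -> set (V -> R)) :
  (forall i, is_wstar_slice N (S i)) -> exists (z : 'I_n -> V) (a : 'I_n -> R),
  forall i, [/\ N (z i) = 1, 0 < a i & S i = wstar_slice N (z i) (a i)].
Proof.
move=> Ss; have /choice [za Hza] : forall i, exists p : V * R,
    [/\ N p.1 = 1, 0 < p.2 & S i = wstar_slice N p.1 p.2].
  by move=> i; have [z [a [z1 [a0 ->]]]] := Ss i; exists (z, a).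
by exists (fun i => (za i).1), (fun i => (za i).2).
Qed.

Lemma dual_ball_diff_le f g x : dual_ball N f -> dual_ball N g -> N x <= 1 ->
  `|f x - g x| <= 2.
Proof.
move=> fb gb Nx; apply: le_trans (ler_normB _ _) _.
by have := dual_ball_le x fb; have := dual_ball_le x gb; lra.
Qed.

Lemma wstar_slice_diff_le S f g x : is_wstar_slice N S -> S f -> S g -> N x <= 1 ->
  `|f x - g x| <= 2.
Proof. by move=> /wstar_slice_dual_ball Sb /Sb fb /Sb gb; apply: dual_ball_diff_le. Qed.

Lemma dual_ball_slice_dir f x w t a d : dual_ball N f -> 1 - a < f x -> 0 < t ->
  N (x + t *: w) <= 1 + d -> f w < (a + d) / t.
Proof.
move=> fb fx t0 Nxw; rewrite ltr_pdivlMr // mulrC.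
have := le_trans (ler_norm _) (dual_ball_le (x + t *: w) fb).
by rewrite (linfunD fb.1) (linfunZ fb.1); lra.
Qed.

Definition diam2_witnessed n (l : 'I_n -> R) (S : 'I_n -> set (V -> R)) :=
  forall e, 0 < e -> exists f g : 'I_n -> V -> R, (forall i, S i (f i) /\ S i (g i)) /\
    exists2 x, N x <= 1 & 2 - e < \sum_i l i * (f i x - g i x).

Section NormZero.
Hypothesis N0 : N 0 = 0.

Lemma dual_norm_le (h : V -> R) c :
  (forall x, N x <= 1 -> `|h x| <= c) -> dual_norm N h <= c.
Proof.
move=> hc; apply: ge_sup; first by exists `|h 0|, 0 => //=; rewrite N0.
by move=> _ [x Nx <-]; apply: hc.
Qed.

Let dual_norm_has_sup (h : V -> R) c : (forall x, N x <= 1 -> `|h x| <= c) ->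
  has_sup [set `|h x| | x in [set x : V | N x <= 1]].
Proof.
move=> hc; split; first by exists `|h 0|, 0 => //=; rewrite N0.
by exists c => _ [x Nx <-]; apply: hc.
Qed.

Lemma dual_norm_ge (h : V -> R) c x : (forall x, N x <= 1 -> `|h x| <= c) ->
  N x <= 1 -> `|h x| <= dual_norm N h.
Proof. by move=> hc Nx; apply: sup_upper_bound (dual_norm_has_sup hc) _ _; exists x. Qed.

Lemma dual_norm_adherent (h : V -> R) c e : (forall x, N x <= 1 -> `|h x| <= c) ->
  0 < e -> exists2 x, N x <= 1 & dual_norm N h - e < `|h x|.
Proof.
by move=> hc e0; have [_ [x Nx <-] lt] := sup_adherent e0 (dual_norm_has_sup hc); exists x.
Qed.

Lemma comb_diff_le n (l : 'I_n -> R) (S : 'I_n -> set (V -> R)) (f g : 'I_n -> V -> R) x :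
  (forall i, 0 <= l i) -> \sum_i l i = 1 -> (forall i, is_wstar_slice N (S i)) ->
  (forall i, S i (f i) /\ S i (g i)) -> N x <= 1 ->
  `|\sum_i l i * (f i x - g i x)| <= 2.
Proof.
move=> l0 l1 Ss fgS Nx; apply: convex_sum_norm_le => // i.
by have [fS gS] := fgS i; apply: wstar_slice_diff_le (Ss i) fS gS Nx.
Qed.

Lemma wstar_SD2P_witnessed n (l : 'I_n -> R) (S : 'I_n -> set (V -> R)) :
  wstar_SD2P N -> (forall i, 0 <= l i) -> \sum_i l i = 1 ->
  (forall i, is_wstar_slice N (S i)) -> diam2_witnessed l S.
Proof.
move=> HN l0 l1 Ss e e0; have e2 : 0 < e / 2 by rewrite divr_gt0.
have : ((2 - e / 2)%:E < dual_diam N (comb_sets l S))%E.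
  by rewrite HN // lte_fin ltrBlDr ltrDl.
move=> /ereal_sup_gt [_ [_ [_ [[f [fS ->]] [[g [gS ->]] ->]]]]]; rewrite lte_fin => ltD.
have fgS i : S i (f i) /\ S i (g i) by [].
have bnd x : N x <= 1 -> `|\sum_i l i * f i x - \sum_i l i * g i x| <= 2.
  by rewrite sumr_mulrB; apply: comb_diff_le.
have [x Nx] := dual_norm_adherent bnd e2; rewrite sumr_mulrB => ltx.
have lt2 : 2 - e < `|\sum_i l i * (f i x - g i x)| by lra.
case: (lerP 0 (\sum_i l i * (f i x - g i x))) => [d0|d0].
  by exists f, g; split=> //; exists x; rewrite // -(ger0_norm d0).
exists g, f; split; first by move=> i; split; apply fgS.
exists x => //.
have -> : \sum_i l i * (g i x - f i x) = - \sum_i l i * (f i x - g i x).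
  by rewrite -sumrN; apply: eq_bigr => i _; rewrite -mulrN opprB.
by rewrite -(ltr0_norm d0).
Qed.

Lemma witnessed_wstar_SD2P :
  (forall n (l : 'I_n -> R) (S : 'I_n -> set (V -> R)),
    (forall i, 0 <= l i) -> \sum_i l i = 1 -> (forall i, is_wstar_slice N (S i)) ->
    diam2_witnessed l S) -> wstar_SD2P N.
Proof.
move=> W n l S l0 l1 Ss.
have bnd F G : comb_sets l S F -> comb_sets l S G ->
    forall x, N x <= 1 -> `|F x - G x| <= 2.
  move=> [f [fS ->]] [g [gS ->]] x Nx; rewrite sumr_mulrB.
  by apply: comb_diff_le => // i; split.
apply/eqP; rewrite eq_le; apply/andP; split.
  apply: ge_ereal_sup => _ [F [G [CF [CG ->]]]].
  by rewrite lee_fin; apply: dual_norm_le (bnd _ _ CF CG).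
apply/lee_addgt0Pr => e e0.
have [f [g [fgS [x Nx ltx]]]] := W n l S l0 l1 Ss e e0.
have CF : comb_sets l S (fun x => \sum_i l i * f i x) by exists f; split=> // i; apply fgS.
have CG : comb_sets l S (fun x => \sum_i l i * g i x) by exists g; split=> // i; apply fgS.
have := dual_norm_ge (bnd _ _ CF CG) Nx; rewrite sumr_mulrB => le.
apply: (@le_trans _ _ ((dual_norm N (fun x =>
   \sum_i l i * f i x - \sum_i l i * g i x))%:E + e%:E)%E).
  by rewrite -EFinD lee_fin; have := ler_norm (\sum_i l i * (f i x - g i x)); lra.
by apply: leeD => //; apply: ereal_sup_ubound; exists (fun x => \sum_i l i * f i x),
  (fun x => \sum_i l i * g i x).
Qed.

End NormZero.
End DualBall.

Section HahnBanach.
Variables (R : realType) (V : normedModType R).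

Definition graph_linear (G : set (V * R)) :=
  forall a v r w s, G (v, r) -> G (w, s) -> G (a *: v + w, a * r + s).
Definition graph_functional (G : set (V * R)) :=
  forall v r s, G (v, r) -> G (v, s) -> r = s.
Definition graph_le_norm (G : set (V * R)) := forall v r, G (v, r) -> r <= `|v|.

Lemma graph_linear0 G v r : graph_linear G -> G (v, r) -> G (0, 0).
Proof. by move=> cl Gv; have := cl (-1) _ _ _ _ Gv Gv; rewrite scaleN1r addNr mulN1r addNr. Qed.

Section Graph.
Variable G : set (V * R).
Hypotheses (G_lin : graph_linear G) (G_le : graph_le_norm G) (G0 : G (0, 0)).

Lemma graph_linearZ a v r : G (v, r) -> G (a *: v, a * r).
Proof. by move=> Gv; have := G_lin a Gv G0; rewrite !addr0. Qed.

(* The one-dimensional step of Hahn-Banach: a value [c] for the new direction [z]. *)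
Lemma graph_extension_value z : exists c,
  (forall w r, G (w, r) -> r - `|w - z| <= c) /\ (forall w r, G (w, r) -> c <= `|w + z| - r).
Proof.
have sep w r w' r' : G (w, r) -> G (w', r') -> r - `|w - z| <= `|w' + z| - r'.
  move=> Gw Gw'; have := G_le (G_lin 1 Gw Gw'); rewrite scale1r mul1r.
  have := ler_normD (w - z) (w' + z); rewrite addrACA addNr addr0; lra.
pose L := [set t | exists w r, G (w, r) /\ t = r - `|w - z|].
have L0 : L (0 - `|0 - z|) by exists 0, 0.
have hsL : has_sup L by split; [exists (0 - `|0 - z|) | exists (`|0 + z| - 0)];
  last by move=> _ [w [r [Gw ->]]]; apply: sep.
exists (sup L); split; first by move=> w r Gw; apply: sup_upper_bound => //; exists w, r.
move=> w r Gw; apply: ge_sup; first by exists (0 - `|0 - z|).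
by move=> _ [w' [r' [Gw' ->]]]; apply: sep.
Qed.

Lemma graph_extension_le z c :
  (forall w r, G (w, r) -> r - `|w - z| <= c) -> (forall w r, G (w, r) -> c <= `|w + z| - r) ->
  forall v r t, G (v, r) -> r + t * c <= `|v + t *: z|.
Proof.
move=> c_ge c_le v r t Gv; have [t0|t0|->] := ltrgtP t 0; last first.
- by rewrite scale0r mul0r !addr0; apply: G_le.
- have := c_le _ _ (graph_linearZ t^-1 Gv).
  have -> : t^-1 *: v + z = t^-1 *: (v + t *: z).
    by rewrite scalerDr scalerA mulVf ?gt_eqF // scale1r.
  rewrite normrZ gtr0_norm ?invr_gt0 // => h; have := ler_wpM2l (ltW t0) h.
  by rewrite mulrBr !mulrA mulfV ?gt_eqF // !mul1r; lra.
- have nt0 : 0 < - t by rewrite oppr_gt0.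
  have := c_ge _ _ (graph_linearZ (- t)^-1 Gv).
  have -> : (- t)^-1 *: v - z = (- t)^-1 *: (v + t *: z).
    by rewrite scalerDr scalerA invrN mulNr mulVf ?ltr0_neq0 // scaleN1r.
  rewrite normrZ gtr0_norm ?invr_gt0 // => h; have := ler_wpM2l (ltW nt0) h.
  by rewrite mulrBr !mulrA mulfV ?gt_eqF // !mul1r; lra.
Qed.

End Graph.

Variable y : V.

(* The alternative [G = set0] gives the empty chain an upper bound in Zorn's lemma. *)
Definition norming_graph (G : set (V * R)) :=
  [/\ G = set0 \/ G (y, `|y|), graph_linear G, graph_functional G & graph_le_norm G].

Lemma norming_graph_line : norming_graph [set q | exists t, q = (t *: y, t * `|y|)].
Proof.
split.
- by right; exists 1; rewrite scale1r mul1r.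
- move=> a _ _ _ _ [t [-> ->]] [t' [-> ->]].
  by exists (a * t + t'); rewrite scalerDl scalerA mulrDl mulrA.
- move=> v r1 r2 [t [ev ->]] [t' [ev' ->]].
  have [->|y0] := eqVneq y 0; first by rewrite normr0 !mulr0.
  have : (t - t') *: y == 0 by rewrite scalerBl -ev -ev' subrr.
  by rewrite scaler_eq0 (negbTE y0) orbF subr_eq0 => /eqP ->.
- by move=> v r [t [-> ->]]; rewrite normrZ ler_wpM2r // ler_norm.
Qed.

Lemma norming_graph_bigcup (F : set (set (V * R))) :
  F `<=` norming_graph -> total_on F subset -> norming_graph (\bigcup_(G in F) G).
Proof.
move=> FP tot.
have common v r w s : (\bigcup_(G in F) G) (v, r) -> (\bigcup_(G in F) G) (w, s) ->
    exists2 G, F G & G (v, r) /\ G (w, s).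
  move=> [G1 F1 G1v] [G2 F2 G2w]; have [h12|h21] := tot _ _ F1 F2.
    by exists G2 => //; split=> //; apply: h12.
  by exists G1 => //; split=> //; apply: h21.
split.
- have [[G [FG Gy]]|nex] := pselect (exists G, F G /\ G (y, `|y|)).
    by right; exists G.
  left; apply/seteqP; split=> // [[v r]] [G FG Gvr].
  have [[G0|Gy] _ _ _] := FP G FG; first by move: Gvr; rewrite G0.
  by exfalso; apply: nex; exists G.
- move=> a v r w s Hv Hw; have [G FG [Gv Gw]] := common _ _ _ _ Hv Hw.
  by have [_ cl _ _] := FP G FG; exists G => //; apply: cl.
- move=> v r s Hv Hw; have [G FG [Gv Gw]] := common _ _ _ _ Hv Hw.
  by have [_ _ fu _] := FP G FG; apply: fu Gv Gw.
- by move=> v r [G FG Gv]; have [_ _ _ bd] := FP G FG; apply: bd Gv.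
Qed.

Lemma norming_graph_extend G z : norming_graph G -> G (y, `|y|) ->
  ~ (exists r, G (z, r)) -> exists2 B, G `<` B & norming_graph B.
Proof.
move=> [_ cl fu bd] Gy nz.
have G0 := graph_linear0 cl Gy.
have [c [c_ge c_le]] := graph_extension_value cl bd G0 z.
pose B := [set q | exists v r t, G (v, r) /\ q = (v + t *: z, r + t * c)].
have GB : G `<=` B by move=> [v r] Gv; exists v, r, 0; rewrite scale0r mul0r !addr0.
exists B.
  split=> // BG; apply: nz; exists (0 + 1 * c); apply: BG.
  by exists 0, 0, 1; split=> //; rewrite scale1r !add0r.
split.
- by right; apply: GB.
- move=> a _ _ _ _ [v [r [t [Gv [-> ->]]]]] [v' [r' [t' [Gv' [-> ->]]]]].
  exists (a *: v + v'), (a * r + r'), (a * t + t'); split; first exact: cl.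
  by congr (_, _); [rewrite scalerDr scalerA scalerDl addrACA | ring].
- move=> q r1 r2 [v [r [t [Gv [eq1 ->]]]]] [v' [r' [t' [Gv' [eq2 ->]]]]].
  have tt' : t = t'.
    apply: contra_notP nz => /eqP ntt; rewrite -subr_eq0 in ntt.
    exists ((t - t')^-1 * (r' - r)).
    have -> : z = (t - t')^-1 *: (v' - v).
      apply: (@scalerI _ _ (t - t')) => //.
      rewrite scalerA mulfV // scale1r scalerBl.
      have e : v + t *: z = v' + t' *: z by move: eq2; rewrite eq1 => -[].
      have -> : v' = v + t *: z - t' *: z by rewrite e addrK.
      by rewrite [RHS]addrC addrA addKr.
    have := graph_linearZ cl G0 (t - t')^-1 (cl (-1) _ _ _ _ Gv Gv').
    by rewrite scaleN1r mulN1r [- v + _]addrC [- r + _]addrC.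
  subst t'; have vv' : v = v' by move: eq2; rewrite eq1 => /addIr.
  by subst v'; rewrite (fu _ _ _ Gv Gv').
- move=> _ _ [v [r [t [Gv [-> ->]]]]].
  exact: graph_extension_le cl bd G0 _ _ c_ge c_le _ _ _ Gv.
Qed.

Lemma norming_functional : exists2 h, dual_ball (fun v : V => `|v|) h & h y = `|y|.
Proof.
have [A [PA Amax]] := @Zorn_bigcup _ norming_graph norming_graph_bigcup.
have [_ cl fu bd] := PA.
have Ay : A (y, `|y|).
  have [[A0|//] _ _ _] := PA; exfalso; apply: Amax norming_graph_line.
  rewrite A0; split=> // line0.
  by have := line0 (y, `|y|); apply; exists 1; rewrite scale1r mul1r.
have G0 := graph_linear0 cl Ay.
have dom v : exists r, A (v, r).
  apply: contrapT => nv.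
  by have [B AB PB] := norming_graph_extend PA Ay nv; apply: Amax AB PB.
have [h Ah] := choice dom.
exists h; last exact: fu (Ah y) Ay.
split; first by move=> a v w; apply: fu (Ah _) _; apply: cl.
move=> v; rewrite ler_norml bd ?andbT //; have := bd _ _ (graph_linearZ cl G0 (-1) (Ah v)).
by rewrite scaleN1r normrN mulN1r lerNl.
Qed.

End HahnBanach.

Section SumOneInfinity.
Variables (R : realType) (X Y : normedModType R).
Local Notation N1 := (@norm_sum1 R X Y).
Local Notation Ni := (@norm_suminf R X Y).
Local Notation nX := (fun x : X => `|x|).
Local Notation nY := (fun y : Y => `|y|).

Lemma norm_sum1_inl (x : X) : N1 (x, 0) = `|x|.
Proof. by rewrite /norm_sum1 normr0 addr0. Qed.

Lemma norm_suminf_inl (x : X) : Ni (x, 0) = `|x|.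
Proof. by rewrite /norm_suminf normr0 max_l. Qed.

Lemma norm_sum1_0 : N1 0 = 0.
Proof. by rewrite -[0]/(0 : X, 0 : Y) norm_sum1_inl normr0. Qed.

Lemma norm_suminf0 : Ni 0 = 0.
Proof. by rewrite -[0]/(0 : X, 0 : Y) norm_suminf_inl normr0. Qed.

Lemma norm_suminf_ge_fst (x : X) (y : Y) : `|x| <= Ni (x, y).
Proof. by rewrite /norm_suminf le_max lexx. Qed.

Lemma norm_suminf_ge_snd (x : X) (y : Y) : `|y| <= Ni (x, y).
Proof. by rewrite /norm_suminf le_max lexx orbT. Qed.

Lemma dual_ball_sum1 (g : X -> R) (h : Y -> R) :
  dual_ball nX g -> dual_ball nY h -> dual_ball N1 (fun z => g z.1 + h z.2).
Proof.
move=> [gl gb] [hl hb]; split; first by move=> a z w /=; rewrite gl hl; ring.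
by move=> [x y]; apply: le_trans (ler_normD _ _) (lerD (gb x) (hb y)).
Qed.

Lemma dual_ball_suminf_fst (g : X -> R) : dual_ball nX g -> dual_ball Ni (fun z => g z.1).
Proof.
move=> [gl gb]; split=> [|[x y]]; first exact: linfun_fst.
exact: le_trans (gb x) (norm_suminf_ge_fst x y).
Qed.

Lemma dual_ball_suminf_snd (h : Y -> R) : dual_ball nY h -> dual_ball Ni (fun z => h z.2).
Proof.
move=> [hl hb]; split=> [|[x y]]; first exact: linfun_snd.
exact: le_trans (hb y) (norm_suminf_ge_snd x y).
Qed.

Lemma dual_ball_suminf_inl f : dual_ball Ni f -> dual_ball nX (fun x => f (x, 0)).
Proof.
move=> fb; split=> [|x]; first exact: linfun_inl fb.1.
by rewrite -norm_suminf_inl; apply: dual_ball_le.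
Qed.

Lemma suminf_slice_small f x b : dual_ball Ni f -> `|x| = 1 -> 1 - b < f (x, 0) ->
  forall y, `|f (0, y)| <= b * `|y|.
Proof.
move=> fb x1 fx; apply: linfun_norm_le (linfun_inr fb.1) _ => w w1.
have Nxw : Ni ((x, 0) + 1 *: (0, w)) <= 1 + 0.
  rewrite scale1r (_ : (x, 0) + (0, w) = (x, w)); last by congr (_, _); rewrite /= ?addr0 ?add0r.
  by rewrite /norm_suminf x1 w1 maxxx addr0.
by have := dual_ball_slice_dir fb fx ltr01 Nxw; rewrite addr0 divr1 => /ltW.
Qed.

Lemma wstar_SD2P_of_suminf : wstar_SD2P Ni -> wstar_SD2P nX.
Proof.
move=> HN; apply: witnessed_wstar_SD2P; first exact: normr0.
move=> n l S l0 l1 /wstar_slice_centers [z [a Hza]] e e0.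
pose b := e / 3; have b0 : 0 < b by rewrite divr_gt0.
pose T i := wstar_slice Ni (z i, 0) (Num.min (a i) b).
have Ts i : is_wstar_slice Ni (T i).
  exists (z i, 0), (Num.min (a i) b); have [z1 a0 _] := Hza i.
  by rewrite norm_suminf_inl z1 lt_min a0 b0.
have restrict g i : T i g ->
    S i (fun x => g (x, 0)) /\ forall y, `|y| <= 1 -> `|g (0, y)| <= b.
  move=> [gb gz]; have [z1 _ ->] := Hza i; split.
    split; first exact: dual_ball_suminf_inl.
    by apply: le_lt_trans gz; rewrite lerD2l lerN2 ge_min lexx.
  have gzb : 1 - b < g (z i, 0).
    by apply: le_lt_trans gz; rewrite lerD2l lerN2 ge_min lexx orbT.
  move=> y y1; apply: le_trans (suminf_slice_small gb z1 gzb y) _.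
  exact: ler_piMr (ltW b0) y1.
have [f [f' [fT [[x y] Nxy lt]]]] := wstar_SD2P_witnessed norm_suminf0 HN l0 l1 Ts b0.
exists (fun i x => f i (x, 0)), (fun i x => f' i (x, 0)).
split; first by move=> i; have [/restrict[? _] /restrict[? _]] := fT i.
exists x; first exact: le_trans (norm_suminf_ge_fst x y) Nxy.
have y1 : `|y| <= 1 := le_trans (norm_suminf_ge_snd x y) Nxy.
have small : `|\sum_i l i * (f i (0, y) - f' i (0, y))| <= 2 * b.
  apply: convex_sum_norm_le => // i; apply: le_trans (ler_normB _ _) _.
  have [/restrict[_ +] /restrict[_ +]] := fT i => /(_ y y1) + /(_ y y1); lra.
have decomp : \sum_i l i * (f i (x, y) - f' i (x, y)) =
    \sum_i l i * (f i (x, 0) - f' i (x, 0)) + \sum_i l i * (f i (0, y) - f' i (0, y)).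
  rewrite -big_split; apply: eq_bigr => i _ /=; have [[[fl _] _] [[fl' _] _]] := fT i.
  by rewrite (linfun_pair x y fl) (linfun_pair x y fl'); ring.
have eb : b * 3 = e by rewrite divfK // pnatr_eq0.
by move: lt; rewrite decomp; have := ler_norm (\sum_i l i * (f i (0, y) - f' i (0, y))); lra.
Qed.

Lemma wstar_SD2P_sum1 : (exists x : X, x != 0) -> wstar_SD2P nX -> wstar_SD2P N1.
Proof.
move=> /unit_vector_exists [u u1] HX; apply: witnessed_wstar_SD2P; first exact: norm_sum1_0.
move=> n l S l0 l1 /wstar_slice_centers [z [a Hza]] e e0.
have /choice [h Hh] : forall i, exists h, dual_ball nY h /\ h (z i).2 = `|(z i).2|.
  by move=> i; have [h ? ?] := norming_functional (z i).2; exists h.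
have a0 i : 0 < a i by have [] := Hza i.
have [SX HSX] := wstar_slices_below (fun i => (z i).1) u1 a0.
have [g [g' [gS [x x1 ltx]]]] :=
  wstar_SD2P_witnessed (normr0 X) HX l0 l1 (fun i => (HSX i).1) e0.
have select i gi : SX i gi -> S i (fun w => gi w.1 + h i w.2).
  move=> giS; have [z1 _ ->] := Hza i; have [hb hz] := Hh i; split.
    exact: dual_ball_sum1 (wstar_slice_dual_ball (HSX i).1 giS) hb.
  by have := (HSX i).2 _ giS; move: z1; rewrite /norm_sum1 /= hz; lra.
exists (fun i w => g i w.1 + h i w.2), (fun i w => g' i w.1 + h i w.2).
split; first by move=> i; split; apply: select; apply gS.
exists (x, 0); first by rewrite norm_sum1_inl.
suff -> : \sum_i l i * (g i x + h i 0 - (g' i x + h i 0)) = \sum_i l i * (g i x - g' i x).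
  by [].
by apply: eq_bigr => i _; ring.
Qed.

Lemma wstar_SD2P_suminf : (exists x : X, x != 0) -> (exists y : Y, y != 0) ->
  wstar_SD2P nX -> wstar_SD2P nY -> wstar_SD2P Ni.
Proof.
move=> /unit_vector_exists [u u1] /unit_vector_exists [v v1] HX HY.
apply: witnessed_wstar_SD2P; first exact: norm_suminf0.
move=> n l S l0 l1 /wstar_slice_centers [z [a Hza]] e e0.
have a0 i : 0 < a i by have [] := Hza i.
have [SX HSX] := wstar_slices_below (fun i => (z i).1) u1 a0.
have [SY HSY] := wstar_slices_below (fun i => (z i).2) v1 a0.
have e2 : 0 < e / 2 by rewrite divr_gt0.
have [g [g' [gS [x x1 ltx]]]] :=
  wstar_SD2P_witnessed (normr0 X) HX l0 l1 (fun i => (HSX i).1) e2.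
have [h [h' [hS [y y1 lty]]]] :=
  wstar_SD2P_witnessed (normr0 Y) HY l0 l1 (fun i => (HSY i).1) e2.
pose A i := `|(z i).2| <= `|(z i).1|.
have select i gi hi : SX i gi -> SY i hi -> S i (fun w => if A i then gi w.1 else hi w.2).
  move=> giS hiS; have [+ _ ->] := Hza i; rewrite /A /norm_suminf.
  case: (lerP `|(z i).2| `|(z i).1|) => _ /= z1; split.
  - exact: dual_ball_suminf_fst (wstar_slice_dual_ball (HSX i).1 giS).
  - by have := (HSX i).2 _ giS; rewrite z1.
  - exact: dual_ball_suminf_snd (wstar_slice_dual_ball (HSY i).1 hiS).
  - by have := (HSY i).2 _ hiS; rewrite z1.
exists (fun i w => if A i then g i w.1 else h i w.2).
exists (fun i w => if A i then g' i w.1 else h' i w.2).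
split; first by move=> i; have [? ?] := gS i; have [? ?] := hS i; split; apply: select.
exists (x, y); first by rewrite /norm_suminf ge_max x1 y1.
rewrite (bigID A) /=.
rewrite [E in _ < E + _](eq_bigr (fun i => l i * (g i x - g' i x))); last by move=> i ->.
rewrite [E in _ < _ + E](eq_bigr (fun i => l i * (h i y - h' i y))); last first.
  by move=> i /negbTE ->.
have LAB : \sum_(i | A i) l i + \sum_(i | ~~ A i) l i = 1 by rewrite -l1 [in RHS](bigID A).
have gx i : g i x - g' i x <= 2.
  by have [gi gi'] := gS i; apply: le_trans (ler_norm _) (wstar_slice_diff_le (HSX i).1 gi gi' x1).
have hy i : h i y - h' i y <= 2.
  by have [hi hi'] := hS i; apply: le_trans (ler_norm _) (wstar_slice_diff_le (HSY i).1 hi hi' y1).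
have := convex_sum_restrict l0 l1 A gx ltx.
have := convex_sum_restrict l0 l1 (fun i => ~~ A i) hy lty.
lra.
Qed.

End SumOneInfinity.

Section PowerFacts.
Variables (R : realType) (p : R).
Hypothesis p_gt1 : 1 < p.

Let p_gt0 : 0 < p. Proof. exact: lt_trans ltr01 p_gt1. Qed.

Lemma ler_powRl (a b : R) : 0 <= a -> 0 <= b -> a <= b -> powR a p <= powR b p.
Proof. by move=> a0 b0; apply: ge0_ler_powR; rewrite ?nnegrE // ltW. Qed.

Lemma ltr_powRl (a b : R) : 0 <= a -> 0 <= b -> a < b -> powR a p < powR b p.
Proof. by move=> a0 b0; apply: gt0_ltr_powR; rewrite ?nnegrE. Qed.

Lemma powR_pinvK (a : R) : 0 <= a -> powR (powR a p) p^-1 = a.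
Proof. by move=> a0; rewrite -powRrM mulfV ?gt_eqF // powRr1. Qed.

Lemma powR_invpK (a : R) : 0 <= a -> powR (powR a p^-1) p = a.
Proof. by move=> a0; rewrite -powRrM mulVf ?gt_eqF // powRr1. Qed.

Lemma powR_le1 (a : R) : 0 <= a -> powR a p <= 1 -> a <= 1.
Proof.
move=> a0; apply: contraTT; rewrite -!ltNge => a1.
by have := ltr_powRl ler01 a0 a1; rewrite powR1.
Qed.

Lemma powR_half_lt1 : powR (2^-1 : R) p^-1 < 1.
Proof.
rewrite ltNge; apply/negP => /(ler_powRl ler01 (powR_ge0 _ _)).
by rewrite powR_invpK ?invr_ge0 // powR1 invf_ge1 //; lra.
Qed.

(* One of [a, b] is at most [2^(-1/p)]. *)
Lemma add_le_of_powR_add_le1 (a b : R) : 0 <= a -> 0 <= b ->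
  powR a p + powR b p <= 1 -> a + b <= 1 + powR (2^-1 : R) p^-1.
Proof.
move=> a0 b0 h; set c := powR (2^-1 : R) p^-1.
have c0 : 0 <= c := powR_ge0 _ _.
have cp : powR c p = 2^-1 by rewrite powR_invpK // invr_ge0.
have := powR_ge0 a p; have := powR_ge0 b p => pb pa.
have a1 : a <= 1 by apply: powR_le1 => //; lra.
have b1 : b <= 1 by apply: powR_le1 => //; lra.
have [ac|ca] := lerP a c; first lra.
have [bc|cb] := lerP b c; first lra.
have := ltr_powRl c0 a0 ca; have := ltr_powRl c0 b0 cb.
by rewrite cp; lra.
Qed.

Lemma powR_le_mul (e : R) : 0 < e -> exists2 s, 0 < s & powR s p <= s * e.
Proof.
move=> e0; set s := powR e (p - 1)^-1; exists s; first exact: powR_gt0.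
have p1 : p - 1 != 0 by rewrite subr_eq0 gt_eqF.
rewrite -(mulr_powRB1 (powR_ge0 _ _) p_gt0) ler_pM2l ?powR_gt0 //.
by rewrite /s -powRrM mulVf // powRr1 // ltW.
Qed.

End PowerFacts.

Section SumP.
Variables (R : realType) (p : R) (X Y : normedModType R).
Hypothesis p_gt1 : 1 < p.
Local Notation Np := (@norm_sump R p X Y).

Let p_gt0 : 0 < p. Proof. exact: lt_trans ltr01 p_gt1. Qed.

Lemma norm_sump_inl (x : X) : Np (x, 0) = `|x|.
Proof. by rewrite /norm_sump /= normr0 powR0 ?gt_eqF // addr0 powR_pinvK. Qed.

Lemma norm_sump_inr (y : Y) : Np (0, y) = `|y|.
Proof. by rewrite /norm_sump /= normr0 powR0 ?gt_eqF // add0r powR_pinvK. Qed.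

Lemma norm_sump0 : Np 0 = 0.
Proof. by rewrite -[0]/(0 : X, 0 : Y) norm_sump_inl normr0. Qed.

Lemma norm_sump_le1 (x : X) (y : Y) : Np (x, y) <= 1 -> powR `|x| p + powR `|y| p <= 1.
Proof.
rewrite /norm_sump /= => h.
have s0 : 0 <= powR `|x| p + powR `|y| p by rewrite addr_ge0 ?powR_ge0.
rewrite -(powR_invpK p_gt1 s0).
by apply: le_trans (ler_powRl p_gt1 (powR_ge0 _ _) ler01 h) _; rewrite powR1.
Qed.

Lemma norm_sump_le (x : X) (y : Y) : 1 <= powR `|x| p + powR `|y| p ->
  Np (x, y) <= powR `|x| p + powR `|y| p.
Proof. by move=> s1; apply: ler1_powR => //; rewrite invf_le1 ?ltW. Qed.

(* Moving from [(u, 0)] by [s w] costs only [s^p] in norm, which is [o(s)]. *)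
Lemma sump_slice_fst_le h (u : X) s a e x y : `|u| = 1 -> 0 < s ->
  a + powR s p <= s * e -> wstar_slice Np (u, 0) a h -> `|h (x, y)| <= `|x| + e * `|y|.
Proof.
move=> u1 s0 ase [hb hu]; rewrite (linfun_pair x y hb.1).
apply: le_trans (ler_normD _ _) (lerD _ _); first by rewrite -norm_sump_inl; apply: dual_ball_le.
apply: linfun_norm_le (linfun_inr hb.1) _ _ => w w1.
have Nuw : Np ((u, 0) + s *: (0, w)) <= 1 + powR s p.
  rewrite (_ : _ + _ = (u, s *: w)); last by congr (_, _); rewrite /= ?scaler0 ?addr0 ?add0r.
  have nsw : `|s *: w| = s by rewrite normrZ w1 mulr1 gtr0_norm.
  by apply: le_trans (norm_sump_le _) _; rewrite u1 nsw powR1 ?lerDl ?powR_ge0.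
have := dual_ball_slice_dir hb hu s0 Nuw; rewrite ltr_pdivlMr // => lt.
by apply/ltW; rewrite -(ltr_pM2l s0) mulrC (lt_le_trans lt).
Qed.

Lemma sump_slice_snd_le h (v : Y) s a e x y : `|v| = 1 -> 0 < s ->
  a + powR s p <= s * e -> wstar_slice Np (0, v) a h -> `|h (x, y)| <= e * `|x| + `|y|.
Proof.
move=> v1 s0 ase [hb hv]; rewrite (linfun_pair x y hb.1).
apply: le_trans (ler_normD _ _) (lerD _ _); last by rewrite -norm_sump_inr; apply: dual_ball_le.
apply: linfun_norm_le (linfun_inl hb.1) _ _ => w w1.
have Nvw : Np ((0, v) + s *: (w, 0)) <= 1 + powR s p.
  rewrite (_ : _ + _ = (s *: w, v)); last by congr (_, _); rewrite /= ?scaler0 ?addr0 ?add0r.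
  have nsw : `|s *: w| = s by rewrite normrZ w1 mulr1 gtr0_norm.
  by apply: le_trans (norm_sump_le _) _; rewrite v1 nsw powR1 addrC ?lerDl ?powR_ge0.
have := dual_ball_slice_dir hb hv s0 Nvw; rewrite ltr_pdivlMr // => lt.
by apply/ltW; rewrite -(ltr_pM2l s0) mulrC (lt_le_trans lt).
Qed.

Lemma not_wstar_SD2P_sump : (exists x : X, x != 0) -> (exists y : Y, y != 0) ->
  ~ wstar_SD2P Np.
Proof.
move=> /unit_vector_exists [u u1] /unit_vector_exists [v v1] HN.
pose c := powR (2^-1 : R) p^-1; have c0 : 0 <= c := powR_ge0 _ _.
have c1 : c < 1 := powR_half_lt1 p_gt1.
(* Chosen so that (1 + eps) (1 + c) = 2 - (1 - c) / 2, the bound witnesses must beat. *)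
pose eps := (1 - c) / (2 * (1 + c)); have eps0 : 0 < eps by apply: divr_gt0; lra.
have epsc : eps * (1 + c) = (1 - c) / 2.
  have c10 : 1 + c != 0 by rewrite lt0r_neq0 //; lra.
  by rewrite /eps; field.
have [s s0 hs] := powR_le_mul p_gt1 (divr_gt0 eps0 (ltr0Sn _ 1)).
pose a := s * (eps / 2); have a0 : 0 < a by rewrite mulr_gt0 // divr_gt0.
have ase : a + powR s p <= s * eps by rewrite /a; lra.
pose S (i : 'I_2) := if i == ord0 then wstar_slice Np (u, 0) a else wstar_slice Np (0, v) a.
pose l (i : 'I_2) := (2^-1 : R).
have l0 i : 0 <= l i by rewrite /l invr_ge0.
have l1 : \sum_i l i = 1 by rewrite big_ord_recl big_ord1 /l; lra.
have Ss i : is_wstar_slice Np (S i).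
  by rewrite /S; case: ifP => _; [exists (u, 0), a; rewrite norm_sump_inl |
    exists (0, v), a; rewrite norm_sump_inr].
have e0 : 0 < (1 - c) / 2 by apply: divr_gt0; lra.
have [f [g [fgS [[x y] Nxy lt]]]] := wstar_SD2P_witnessed norm_sump0 HN l0 l1 Ss e0.
have hxy : `|x| + `|y| <= 1 + c.
  by apply: (add_le_of_powR_add_le1 p_gt1) => //; apply: norm_sump_le1.
have [f0 g0] := fgS ord0; have [f1 g1] := fgS (lift ord0 ord0).
have := sump_slice_fst_le x y u1 s0 ase f0; have := sump_slice_fst_le x y u1 s0 ase g0.
have := sump_slice_snd_le x y v1 s0 ase f1; have := sump_slice_snd_le x y v1 s0 ase g1.
have := le_trans (ler_norm _) (ler_normB (f ord0 (x, y)) (g ord0 (x, y))).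
have := le_trans (ler_norm _) (ler_normB (f (lift ord0 ord0) (x, y)) (g (lift ord0 ord0) (x, y))).
have := ler_wpM2l (ltW eps0) hxy.
move: lt; rewrite big_ord_recl big_ord1 /l; lra.
Qed.

End SumP.

Theorem corollary4p10 (R : realType) (X Y : completeNormedModType R)
  (hX : exists x : X, x != 0) (hY : exists y : Y, y != 0) :
  (wstar_SD2P (fun x : X => `|x|) ->
     wstar_SD2P (@norm_sum1 R X Y)) /\
  (forall p : R, 1 < p -> ~ wstar_SD2P (@norm_sump R p X Y)) /\
  (wstar_SD2P (fun x : X => `|x|) -> wstar_SD2P (fun y : Y => `|y|) ->
     wstar_SD2P (@norm_suminf R X Y)) /\
  (wstar_SD2P (@norm_suminf R X Y) -> wstar_SD2P (fun x : X => `|x|)).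
Proof.
split; first exact: wstar_SD2P_sum1.
split; first by move=> p p1; apply: not_wstar_SD2P_sump.
split; first exact: wstar_SD2P_suminf.
exact: wstar_SD2P_of_suminf.
Qed.
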